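(* Let $m\geq 2$ be a square-free integer with $m\equiv 2$ or $3 \pmod 4$, and let $K=\mathbb{Q}(\sqrt m)$. Then: if $m=2$, $U_K=\{1,\sqrt2=2\cos(2\pi/8)\}\subset\mathcal{F}_K=\{1,\sqrt2,1+\sqrt2\}$ and $1+\sqrt2=\min T_K$; if $m=3$, $U_K=\{1,\sqrt3=2\cos(2\pi/12)\}\subset\mathcal{F}_K=\{1,\sqrt3,1+\sqrt3\}$ and $1+\sqrt3=\min T_K$; if $m\geq 6$, $U_K=\{1\}\subset\mathcal{F}_K=\{1,\ \lfloor\sqrt m\rfloor-1+\sqrt m,\ 1+\min T_K\}$ and $\lfloor\sqrt m\rfloor-1+\sqrt m=\min T_K$.
   Context: For a real number field $K$, $\wp_K$ is the set of Pisot numbers $\theta\in K$ (real algebraic integers $>1$ whose other conjugates have modulus $<1$) with $\mathbb{Q}(\theta)=K$, enumerated $\theta_1<\theta_2<\cdots$; $\mathcal{F}_K:=\{\theta_{n+1}-\theta_n\mid n\in\mathbb{N}\}$. $U_K$ is the set of root of unity trace numbers in $K$, i.e. positive algebraic integers of the form $2\cos(2k\pi/n)$ with $n\geq4$, $1\leq k\leq n-1$, $\gcd(k,n)=1$, lying in $K$. $T_K$ is the set of algebraic integers $\beta\in K$ with $\beta>2$ whose conjugate $\beta'$ (image under the nontrivial embedding of $K$) lies in $(-2,2)$, $\beta'\neq 0$. *)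

From HB Require Import structures.
From mathcomp Require Import all_boot all_order all_algebra.
From mathcomp Require Import all_classical all_reals all_analysis.
Set Implicit Arguments. Unset Strict Implicit. Unset Printing Implicit Defensive.
Import Order.TTheory GRing.Theory Num.Theory.
Local Open Scope ring_scope.

Section QuadField.
Variables (R : realType) (m : nat).

Definition sqm : R := Num.sqrt (m%:R).

Definition inK (x : R) : Prop :=
  exists a b : rat, x = ratr a + ratr b * sqm.

Definition conjK (x y : R) : Prop :=
  exists a b : rat, x = ratr a + ratr b * sqm /\ y = ratr a - ratr b * sqm.

(* Q(x) = K : x lies in K and sqrt m lies in Q[x] = Q(x) *)
Definition generatesK (x : R) : Prop :=
  inK x /\ exists p : {poly rat}, sqm = (map_poly ratr p).[x].

Definition algInt (x : R) : Prop :=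
  exists p : {poly int}, p \is monic /\ root (map_poly (fun z : int => z%:~R) p) x.

Definition PisotK (t : R) : Prop :=
  1 < t /\ algInt t /\ generatesK t /\ exists t', conjK t t' /\ `|t'| < 1.

Definition FK (d : R) : Prop :=
  exists t1 t2, PisotK t1 /\ PisotK t2 /\ t1 < t2 /\
    (forall t, PisotK t -> ~ (t1 < t /\ t < t2)) /\ d = t2 - t1.

Definition UK (x : R) : Prop :=
  0 < x /\ algInt x /\ inK x /\
  exists n k : nat, (4 <= n)%N /\ (1 <= k)%N /\ (k <= n - 1)%N /\ coprime k n /\
    x = 2 * cos (2 * k%:R * pi / n%:R).

Definition TK (b : R) : Prop :=
  inK b /\ algInt b /\ 2 < b /\
  exists b', conjK b b' /\ -2 < b' /\ b' < 2 /\ b' != 0.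

End QuadField.

Definition squarefree (n : nat) : Prop :=
  forall p : nat, prime p -> ~~ (p * p %| n)%N.

Definition is_min (R : realType) (P : R -> Prop) (x : R) : Prop :=
  P x /\ forall y, P y -> x <= y.

(* Since m = 2 or 3 (mod 4), the algebraic integers of K = Q(sqrt m) are
   exactly the a + b sqrt m with a, b integers.  Hence the Pisot numbers of K
   are the a + b sqrt m with b >= 1 and |a - b sqrt m| < 1, i.e.
   a = floor (b sqrt m) or floor (b sqrt m) + 1.  In increasing order they
   alternate between gaps 1 (same b) and gaps c - 1 + sqrt m (from b to b + 1),
   where the carry c = floor ((b + 1) sqrt m) - floor (b sqrt m) is
   floor (sqrt m) or floor (sqrt m) + 1, both values occurring because sqrt m
   is irrational.
   If x = 2 cos (2 pi k / n) lies in Z[sqrt m], its conjugate x' satisfies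
   |x'| <= 2: otherwise the conjugates of 2 cos (2 pi j k / n), which obey the
   Chebyshev recursion driven by x', would grow in absolute value, whereas
   for j = n they equal 2.  Together with 0 < x < 2 this leaves x = 1 and,
   when m < 4, x = sqrt m.  Finally the elements of T_K are a + b sqrt m with
   b >= 1 and |a - b sqrt m| < 2, and their minimum is read off directly. *)

From HB Require Import structures.
From mathcomp Require Import all_boot all_order all_algebra.
From mathcomp Require Import all_classical all_reals all_analysis.
From mathcomp Require Import zify ring lra.
Import Order.TTheory GRing.Theory Num.Theory.
Local Open Scope ring_scope.

Lemma squarefree1 : squarefree 1.
Proof. by move=> p /prime_gt1 p1; rewrite dvdn1 muln_eq1 andbb; case: eqP p1 => // ->. Qed.

Lemma squarefree_sqr_denq {c : nat} {r : rat} {k : int} :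
  squarefree c -> c%:R * r ^+ 2 = k%:~R -> denq r = 1.
Proof.
move=> c_sf crk.
have e2 : (c%:Z * numq r ^+ 2 = k * denq r ^+ 2)%R.
  by apply: (@intr_inj rat); rewrite !intrM -crk numqE -pmulrn; ring.
have e3 : (c * (`|numq r| * `|numq r|) = `|k| * (`|denq r| * `|denq r|))%N.
  by have := congr1 absz e2; rewrite !abszM.
have d2c : (`|denq r| * `|denq r| %| c)%N.
  have : (`|denq r| * `|denq r| %| c * (`|numq r| * `|numq r|))%N.
    by rewrite e3 dvdn_mull.
  by rewrite Gauss_dvdl // coprimeMl !coprimeMr coprime_sym coprime_num_den.
have d0 := denq_gt0 r.
suff : `|denq r|%N = 1%N by lia.
case: (ltngtP `|denq r| 1) => // d1; first by lia.
have := c_sf _ (pdiv_prime d1); rewrite (dvdn_trans _ d2c) //.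
by rewrite dvdn_mul // pdiv_dvd.
Qed.

(* With [m = 4 k + r], [S = 2 a + e] and [U = 2 b + f], the hypothesis reduces
   to [e ^ 2 = r f ^ 2 (mod 4)], which forces [e = f = 0] when [r] is 2 or 3. *)
Lemma sqr_sub_mul_sqr_dvd4 {m : nat} {S U N : int} :
  (m %% 4 == 2)%N \/ (m %% 4 == 3)%N -> S ^+ 2 - m%:Z * U ^+ 2 = 4 * N ->
  exists S' U' : int, S = 2 * S' /\ U = 2 * U'.
Proof.
move=> m_mod h.
have eS := divz_eq S 2; have eU := divz_eq U 2; have em := divn_eq m 4.
set a := (S %/ 2)%Z in eS *; set e := (S %% 2)%Z in eS.
set b := (U %/ 2)%Z in eU *; set f := (U %% 2)%Z in eU.
set k := (m %/ 4)%N in em; set r := (m %% 4)%N in em m_mod.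
have e01 : e = 0 \/ e = 1.
  by have := modz_ge0 S (isT : (2:int) != 0); have := ltz_pmod S (isT : (0:int) < 2); lia.
have f01 : f = 0 \/ f = 1.
  by have := modz_ge0 U (isT : (2:int) != 0); have := ltz_pmod U (isT : (0:int) < 2); lia.
have emz : m%:Z = 4 * k%:Z + r%:Z by rewrite {1}em; lia.
have key : 4 * (N - (a ^+ 2 + a * e - 4 * k%:Z * b ^+ 2 - 4 * k%:Z * b * f
    - k%:Z * f ^+ 2 - r%:Z * b ^+ 2 - r%:Z * b * f)) = e ^+ 2 - r%:Z * f ^+ 2.
  by rewrite mulrBr -h eS eU emz; ring.
exists a, b.
have r23 : r = 2%N \/ r = 3%N by case: m_mod => /eqP ->; [left|right].
by case: e01 => e0; case: f01 => f0; rewrite e0 f0 in key eS eU;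
  case: r23 => r0; rewrite r0 in key; lia.
Qed.

Definition quad_poly {T : nzRingType} (c0 c1 : T) : {poly T} := Poly [:: c0; c1; 1].

Section QuadPoly.
Context {T : nzRingType} (c0 c1 : T).

Lemma quad_polyE : quad_poly c0 c1 = [:: c0; c1; 1] :> seq T.
Proof. by rewrite /quad_poly (@PolyK _ 0) //= oner_neq0. Qed.

Lemma size_quad_poly : size (quad_poly c0 c1) = 3%N.
Proof. by rewrite quad_polyE. Qed.

Lemma quad_poly_monic : quad_poly c0 c1 \is monic.
Proof. by rewrite monicE /lead_coef size_quad_poly quad_polyE. Qed.

Lemma coef_quad_poly i : (quad_poly c0 c1)`_i = [:: c0; c1; 1]`_i.
Proof. by rewrite quad_polyE. Qed.

Lemma horner_map_quad_poly (S : comNzRingType) (f : {rmorphism T -> S}) x :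
  (map_poly f (quad_poly c0 c1)).[x] = x ^+ 2 + f c1 * x + f c0.
Proof. by rewrite map_Poly horner_Poly /= rmorph1 mul0r add0r mul1r; ring. Qed.

End QuadPoly.

Lemma monic_dvdp_int_coef {p : {poly int}} {q : {poly rat}} :
  p \is monic -> q \is monic -> q %| map_poly intr p ->
  forall i, exists z : int, q`_i = z%:~R.
Proof.
move=> pm qm /dvdpP_rat_int [p1 [a a0 qE] [r pE]] i.
have l1 : lead_coef p1 * lead_coef r = 1 by rewrite -lead_coefM -pE; apply/monicP.
have ll : lead_coef p1 * lead_coef p1 = 1.
  have : (`|lead_coef p1| * `|lead_coef r| = 1)%N by rewrite -abszM l1.
  move/eqP; rewrite muln_eq1 => /andP[/eqP l1abs _].
  by have [->|->] : lead_coef p1 = 1 \/ lead_coef p1 = -1 by lia.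
have la : a * (lead_coef p1)%:~R = 1.
  by have := monicP qm; rewrite qE lead_coefZ lead_coef_map_inj //; exact: intr_inj.
have l2 : (lead_coef p1)%:~R * (lead_coef p1)%:~R = 1 :> rat by rewrite -intrM ll.
exists (lead_coef p1 * p1`_i); rewrite qE coefZ coef_map_id0 // intrM.
by rewrite -[a]mulr1 -[X in a * X]l2 mulrA la mul1r.
Qed.

Section FloorCarry.
Context {F : archiRealFieldType}.
Implicit Types x y : F.

Lemma floor_lt_nonint {x} : x \isn't a Num.int -> (Num.floor x)%:~R < x.
Proof.
move=> xNint; rewrite lt_neqAle floor_le andbT.
by apply: contra xNint; rewrite intrEfloor.
Qed.

Lemma floor_near x (a : int) : x \isn't a Num.int ->
  `|a%:~R - x| < 1 <-> a = Num.floor x \/ a = Num.floor x + 1.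
Proof.
move=> xNint; have flx := floor_lt_nonint xNint.
have /andP[_ xfl] := floor_itv x; rewrite intrD1 in xfl.
rewrite ltr_norml; split.
  move=> /andP[ax xa].
  have : Num.floor x < a + 1 by rewrite floor_lt_int intrD1; lra.
  have : a < Num.floor x + 1 + 1 by rewrite -(ltr_int F) !intrD1; lra.
  lia.
by case=> ->; rewrite ?intrD1; apply/andP; split; lra.
Qed.

Lemma floorD_cases x y :
  Num.floor (x + y) = Num.floor x + Num.floor y \/
  Num.floor (x + y) = Num.floor x + Num.floor y + 1.
Proof.
have /andP[lx ux] := floor_itv x; have /andP[ly uy] := floor_itv y.
have /andP[lxy uxy] := floor_itv (x + y); rewrite !intrD1 in ux uy uxy.
have : Num.floor x + Num.floor y <= Num.floor (x + y).
  by rewrite floor_ge_int intrD; lra.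
have : Num.floor (x + y) < Num.floor x + Num.floor y + 1 + 1.
  by rewrite floor_lt_int !intrD1 intrD; lra.
lia.
Qed.

Definition floor_carry x (n : nat) : int :=
  Num.floor (n.+1%:R * x) - Num.floor (n%:R * x).

Lemma floor_carry_cases x n :
  floor_carry x n = Num.floor x \/ floor_carry x n = Num.floor x + 1.
Proof.
rewrite /floor_carry -addn1 natrD mulrDl mul1r.
by case: (floorD_cases (n%:R * x) x) => ->; [left|right]; ring.
Qed.

Lemma floor_mulSn_const_carry x (c : int) :
  (forall n, (0 < n)%N -> floor_carry x n = c) ->
  forall n, Num.floor (n.+1%:R * x) = Num.floor x + n%:Z * c.
Proof.
move=> cst; elim=> [|n IH]; first by rewrite mul1r mul0r addr0.
have /eqP := cst n.+1 isT; rewrite /floor_carry IH subr_eq => /eqP ->.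
by rewrite intS; ring.
Qed.

Lemma floor_dist x : `|(Num.floor x)%:~R - x| < 1.
Proof.
have /andP[] := floor_itv x; rewrite intrD1 ltr_norml => ? ?.
by apply/andP; split; lra.
Qed.

(* If every carry for [n > 0] were the other value [c'], then
   [floor ((n + 1) x) - (n + 1) x] would differ from [n (c' - x)] by a bounded
   amount, which is absurd as [c' != x]. *)
Lemma exists_floor_carry {x} {c : int} : x \isn't a Num.int ->
  c = Num.floor x \/ c = Num.floor x + 1 ->
  exists2 n, (0 < n)%N & floor_carry x n = c.
Proof.
move=> xNint hc; apply: contrapT => noc.
set c' := Num.floor x + Num.floor x + 1 - c.
have fl n : Num.floor (n.+1%:R * x) = Num.floor x + n%:Z * c'.
  apply: floor_mulSn_const_carry => {}n n0.
  have cn : floor_carry x n != c by apply/eqP => cn; apply: noc; exists n.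
  by move: cn hc; case: (floor_carry_cases x n) => ->; rewrite /c'; lia.
have d0 : 0 < `|c'%:~R - x|.
  by rewrite normr_gt0 subr_eq0; apply: contraNneq xNint => <-; apply: intr_int.
set n := Num.Def.archi_bound (2 / `|c'%:~R - x|).
have hn : 2 / `|c'%:~R - x| < n%:R by apply: archi_boundP; rewrite divr_ge0 // ltW.
have : `|n%:R * (c'%:~R - x)| < 2.
  have -> : n%:R * (c'%:~R - x) =
      ((Num.floor (n.+1%:R * x))%:~R - n.+1%:R * x) - ((Num.floor x)%:~R - x).
    by rewrite fl intrD intrM -natr1 -pmulrn; ring.
  apply: le_lt_trans (ler_normB _ _) _.
  by have := floor_dist x; have := floor_dist (n.+1%:R * x); lra.
rewrite normrM normr_nat; apply/negP; rewrite -leNgt -ler_pdivrMr //.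
exact: ltW.
Qed.

End FloorCarry.

Lemma lucas_norm_gt2 {F : realDomainType} {c : F} {y : nat -> F} :
  2 < `|c| -> y 0%N = 2 -> y 1%N = c -> (forall j, y j.+2 = c * y j.+1 - y j) ->
  forall j, 2 < `|y j.+1|.
Proof.
move=> c2 y0 y1 yS.
suff grow j : 2 <= `|y j| < `|y j.+1| by move=> j; have /andP[] := grow j; lra.
elim: j => [|j /andP[yj yjS]]; first by rewrite y0 y1 ger0_norm // lexx.
apply/andP; split; first lra.
have := lerB_dist (c * y j.+1) (y j); rewrite -yS normrM.
have : 2 * `|y j.+1| < `|c| * `|y j.+1| by rewrite ltr_pM2r //; lra.
lra.
Qed.

Lemma increasing_gaps {F : realDomainType} {P : F -> Prop} {u : nat -> F} :
  (forall n, u n < u n.+1) -> (forall x, P x <-> exists n, x = u n) ->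
  forall d,
    (exists t1 t2, P t1 /\ P t2 /\ t1 < t2 /\
       (forall t, P t -> ~ (t1 < t /\ t < t2)) /\ d = t2 - t1) <->
    exists n, d = u n.+1 - u n.
Proof.
move=> uS Pu d.
have u_mono : {mono u : i j / (i < j)%N >-> i < j}.
  exact: leW_mono (le_mono (homo_ltn lt_trans uS)).
split.
  move=> [_ [_ [/Pu[i ->] [/Pu[j ->] [uij [gap ->]]]]]].
  rewrite u_mono in uij; exists i; congr (_ - _).
  case: (ltngtP j i.+1) => [|ji|-> //]; first by move: uij; lia.
  by exfalso; apply: (gap (u i.+1)); [apply/Pu; exists i.+1 | rewrite !u_mono ltnSn].
move=> [n ->]; exists (u n), (u n.+1); do 2 (split; first by apply/Pu; eexists).
split; first exact: uS.
split=> // _ /Pu[k ->]; rewrite !u_mono; lia.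
Qed.

Section TwoCos.
Context {R : realType}.
Implicit Types (a th : R) (j k n : nat).

Lemma two_cos_recS th j :
  2 * cos (j.+2%:R * th) = 2 * cos th * (2 * cos (j.+1%:R * th)) - 2 * cos (j%:R * th).
Proof.
have -> : j.+2%:R * th = j.+1%:R * th + th by rewrite -(natr1 j.+1) mulrDl mul1r.
have -> : j%:R * th = j.+1%:R * th - th by rewrite -(natr1 j) mulrDl mul1r addrK.
by rewrite cosD cosB; ring.
Qed.

Lemma cos_root_of_unity n k : (0 < n)%N -> cos (n%:R * (2 * k%:R * pi / n%:R)) = 1 :> R.
Proof.
move=> n0; have -> : n%:R * (2 * k%:R * pi / n%:R) = 0 + (pi *+ 2) *+ k :> R.
  rewrite add0r -[(pi *+ 2) *+ k]mulr_natl -[pi *+ 2]mulr_natl; field.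
  by rewrite pnatr_eq0 -lt0n.
by rewrite (periodicn (@cosD2pi R)) cos0.
Qed.

Lemma cos_root_of_unity_lt1 {n k} : (1 <= k)%N -> (k < n)%N ->
  cos (2 * k%:R * pi / n%:R) < 1 :> R.
Proof.
move=> k1 kn; have pi0 := pi_gt0 R.
have n0 : 0 < n%:R :> R by rewrite ltr0n; apply: leq_ltn_trans kn.
pose y : R := k%:R * pi / n%:R.
have -> : 2 * k%:R * pi / n%:R = y *+ 2 by rewrite /y mulr2n; ring.
have y_gt0 : 0 < sin y.
  apply: sin_gt0_pi; apply/andP; split.
    by rewrite /y divr_gt0 // mulr_gt0 // ltr0n.
  by rewrite /y ltr_pdivrMr // mulrC ltr_pM2l // ltr_nat.
by rewrite cos_mulr2n cos2sin2 mulr2n; nra.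
Qed.

Lemma two_cos_half a : - pi < a < pi -> 2 * cos (a / 2) = Num.sqrt (2 + 2 * cos a).
Proof.
move=> a_pi; have c0 : 0 < cos (a / 2).
  by apply: cos_gt0_pihalf; apply/andP; split; lra.
have -> : 2 + 2 * cos a = (2 * cos (a / 2)) ^+ 2.
  by rewrite {1}[a]splitr -mulr2n cos_mulr2n; ring.
by rewrite sqrtr_sqr ger0_norm //; lra.
Qed.

Lemma two_cos_pi3 : 2 * cos (pi / 3) = 1 :> R.
Proof.
set a := pi / 3; have pi0 := pi_gt0 R.
have c0 : 0 < cos a by apply: cos_gt0_pihalf; rewrite /a; apply/andP; split; lra.
have := cospi R; rewrite [pi](_ : _ = a + a *+ 2); last by rewrite /a mulr2n; field.
rewrite cosD cos_mulr2n sin_mulr2n => E.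
have S := sin2cos2 a.
have : (cos a + 1) * (2 * cos a - 1) ^+ 2 = 0 by nra.
by move/eqP; rewrite mulf_eq0 sqrf_eq0 => /orP[] /eqP; lra.
Qed.

Lemma two_cos_pi4 : 2 * cos (2 * pi / 8) = Num.sqrt 2 :> R.
Proof.
have pi0 := pi_gt0 R.
rewrite (_ : 2 * pi / 8 = pi / 2 / 2); last by field.
by rewrite two_cos_half ?cos_pihalf ?mulr0 ?addr0 //; apply/andP; split; lra.
Qed.

Lemma two_cos_pi6 : 2 * cos (2 * pi / 12) = Num.sqrt 3 :> R.
Proof.
have pi0 := pi_gt0 R.
rewrite (_ : 2 * pi / 12 = pi / 3 / 2); last by field.
by rewrite two_cos_half ?two_cos_pi3 ?natr1 //; apply/andP; split; lra.
Qed.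

End TwoCos.

Section RealQuadraticField.
Variables (R : realType) (m : nat).
Hypotheses (m_ge2 : (2 <= m)%N) (m_sf : squarefree m)
  (m_mod4 : (m %% 4 == 2)%N \/ (m %% 4 == 3)%N).
Local Notation s := (sqm R m).

Lemma sqm_sqr : s ^+ 2 = m%:R.
Proof. by rewrite sqr_sqrtr // ler0n. Qed.

Lemma sqm_gt1 : 1 < s.
Proof.
have := sqm_sqr; have := sqrtr_ge0 (m%:R : R).
have : 2 <= m%:R :> R by rewrite (ler_nat R 2 m).
rewrite -/s; nra.
Qed.

Lemma ratr_neq_sqm (r : rat) : ratr r != s.
Proof.
apply/eqP => rs.
have r2 : 1%:R * r ^+ 2 = (m%:Z)%:~R :> rat.
  by apply: (fmorph_inj (@ratr R)); rewrite mul1r rmorphXn /= rs sqm_sqr ratr_int.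
have rE : r = (numq r)%:~R by rewrite numqE (squarefree_sqr_denq squarefree1 r2) mulr1.
have z2 : (`|numq r| * `|numq r| = m)%N.
  suff /(congr1 absz) : (numq r * numq r = m%:Z)%R by rewrite abszM.
  by apply: (@intr_inj rat); rewrite intrM -rE -expr2 -r2 mul1r.
have z1 : (1 < `|numq r|)%N by move: z2 m_ge2; nia.
by have := m_sf _ (pdiv_prime z1); rewrite -z2 dvdn_mul // pdiv_dvd.
Qed.

Lemma ratr_sqm_inj (a b c d : rat) :
  ratr a + ratr b * s = ratr c + ratr d * s -> a = c /\ b = d.
Proof.
move=> h; have [bd|bd] := eqVneq b d.
  subst d; split=> //; apply: (fmorph_inj (@ratr R)); exact: addIr h.
suff : ratr ((a - c) / (d - b)) = s by move/eqP; rewrite (negbTE (ratr_neq_sqm _)).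
have db : ratr d - ratr b != 0 :> R by rewrite -rmorphB fmorph_eq0 subr_eq0 eq_sym.
rewrite fmorph_div /= !rmorphB /=; apply: (mulIf db); rewrite mulfVK //.
apply/eqP; rewrite -subr_eq0; apply/eqP.
by transitivity ((ratr a + ratr b * s) - (ratr c + ratr d * s)); [ring | rewrite h subrr].
Qed.

Definition zsqm (a b : int) : R := a%:~R + b%:~R * s.
Definition zsqm_conj (a b : int) : R := a%:~R - b%:~R * s.

Lemma zsqm_ratr (a b : int) : zsqm a b = ratr a%:~R + ratr b%:~R * s.
Proof. by rewrite !ratr_int. Qed.

Lemma zsqm0 (a : int) : zsqm a 0 = a%:~R.
Proof. by rewrite /zsqm mulr0z mul0r addr0. Qed.

Lemma zsqm1 (a : int) : zsqm a 1 = a%:~R + s.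
Proof. by rewrite /zsqm mulr1z mul1r. Qed.

Lemma zsqm_inj (a b c d : int) : zsqm a b = zsqm c d -> a = c /\ b = d.
Proof. by rewrite !zsqm_ratr => /ratr_sqm_inj[/intr_inj ? /intr_inj ?]. Qed.

Lemma intr_neq_mul_sqm (a b : int) : b != 0 -> a%:~R != b%:~R * s.
Proof.
move=> b0; apply/eqP => abs; move: b0.
have [_ <-] : a = 0 /\ 0 = b by apply: zsqm_inj; rewrite zsqm0 /zsqm mulr0z add0r.
by rewrite eqxx.
Qed.

Lemma mul_sqm_nonint (b : int) : b != 0 -> b%:~R * s \isn't a Num.int.
Proof. by move=> b0; rewrite intrEfloor; apply: intr_neq_mul_sqm. Qed.

Lemma sqm_nonint : s \isn't a Num.int.
Proof. by have := @mul_sqm_nonint 1; rewrite mul1r; apply. Qed.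

Lemma conjK_zsqm (a b : int) y : conjK m (zsqm a b) y <-> y = zsqm_conj a b.
Proof.
split; last by move=> ->; exists a%:~R, b%:~R; rewrite !ratr_int.
by case=> a' [b' [+ ->]]; rewrite zsqm_ratr => /ratr_sqm_inj[<- <-]; rewrite !ratr_int.
Qed.

Lemma inK_zsqm (a b : int) : inK m (zsqm a b).
Proof. by exists a%:~R, b%:~R; rewrite !ratr_int. Qed.

Lemma algInt_zsqm (a b : int) : algInt (zsqm a b).
Proof.
exists (quad_poly (a ^+ 2 - m%:Z * b ^+ 2) (- (2 * a))).
split; first exact: quad_poly_monic.
rewrite /root horner_map_quad_poly /zsqm /= !(intrD, intrB, intrM, intrN).
have -> : (m%:Z)%:~R = s ^+ 2 :> R by rewrite sqm_sqr.
by apply/eqP; ring.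
Qed.

(* The only place where [m = 2, 3 (mod 4)] is needed: for [m = 1 (mod 4)],
   [al = be = 1/2] satisfies both hypotheses. *)
Lemma quad_coef_int {al be : rat} {z0 z1 : int} :
  al ^+ 2 - m%:R * be ^+ 2 = z0%:~R -> - (2 * al) = z1%:~R ->
  exists a b : int, al = a%:~R /\ be = b%:~R.
Proof.
move=> z0E z1E.
have : m%:R * (2 * be) ^+ 2 = (z1 ^+ 2 - 4 * z0)%:~R.
  by rewrite intrB intrM expr2 intrM -z0E -z1E; ring.
move=> /(squarefree_sqr_denq m_sf) d1.
set u := numq (2 * be); have uE : 2 * be = u%:~R by rewrite /u numqE d1 mulr1.
have : z1 ^+ 2 - m%:Z * u ^+ 2 = 4 * z0.
  apply: (@intr_inj rat); rewrite !expr2 intrB !intrM -uE -z1E -z0E.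
  by rewrite -[(m%:Z)%:~R]/(m%:R : rat); ring.
move=> /(sqr_sub_mul_sqr_dvd4 m_mod4) [S [U [z1S uU]]].
exists (- S), U; split; apply: (mulfI (_ : (2 : rat) != 0)) => //.
  by rewrite -[LHS]opprK z1E z1S intrN intrM mulrN.
by rewrite uE uU intrM.
Qed.

(* The remainder of [P] modulo the quadratic is linear and vanishes at the
   irrational point [al + be sqrt m], hence is zero. *)
Lemma quad_poly_dvdp {P : {poly rat}} {al be : rat} : be != 0 ->
  root (map_poly ratr P) (ratr al + ratr be * s) ->
  quad_poly (al ^+ 2 - m%:R * be ^+ 2) (- (2 * al)) %| P.
Proof.
move=> be0 Px; set q := quad_poly _ _; set x := ratr al + ratr be * s.
have qx : (map_poly ratr q).[x] = 0.
  rewrite horner_map_quad_poly /x /= !(rmorphB, rmorphM, rmorphN, rmorphXn) /=.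
  by rewrite !ratr_nat -sqm_sqr; ring.
rewrite /dvdp; set r := P %% q.
have r_size : (size r <= 2)%N.
  by have := ltn_modp P q; rewrite size_quad_poly monic_neq0 // quad_poly_monic.
have : (map_poly ratr r).[x] = 0.
  move/eqP: Px; rewrite (divp_eq P q) -/r rmorphD rmorphM /= hornerD hornerM.
  by rewrite qx mulr0 add0r.
rewrite (@horner_coef_wide _ 2) ?size_map_poly // !big_ord_recr big_ord0 /= add0r.
rewrite !coef_map /= expr0 expr1 mulr1 => rx.
have : ratr (r`_0 + r`_1 * al) + ratr (r`_1 * be) * s = ratr 0 + ratr 0 * s :> R.
  by rewrite !rmorph0 mul0r addr0 -rx /x !(rmorphD, rmorphM) /=; ring.
move=> /ratr_sqm_inj[r0 /eqP]; rewrite mulf_eq0 (negbTE be0) orbF => /eqP r1.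
rewrite r1 mul0r addr0 in r0.
apply/eqP/polyP => -[|[|i]]; rewrite coef0 //.
exact/nth_default/(leq_trans r_size).
Qed.

Lemma algInt_inK_zsqm {x} : inK m x -> algInt x -> exists a b : int, x = zsqm a b.
Proof.
case=> al [be ->] [p [p_monic]].
have -> : map_poly (intr : int -> R) p = map_poly ratr (map_poly intr p).
  by rewrite -map_poly_comp; apply: eq_map_poly => z /=; rewrite ratr_int.
have [->|be0] := eqVneq be 0.
  rewrite rmorph0 mul0r addr0 fmorph_root -dvdp_XsubCl => /(monic_dvdp_int_coef p_monic).
  case/(_ (monicXsubC al) 0%N) => z; rewrite coefB coefX coefC /= sub0r => alz.
  by exists (- z), 0; rewrite zsqm0 -ratr_int intrN -alz opprK.
move=> /(quad_poly_dvdp be0) /(monic_dvdp_int_coef p_monic (quad_poly_monic _ _)) coef_int.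
have [z0 z0E] := coef_int 0%N; have [z1 z1E] := coef_int 1%N.
rewrite coef_quad_poly in z0E; rewrite coef_quad_poly in z1E.
by have [a [b [-> ->]]] := quad_coef_int z0E z1E; exists a, b; rewrite zsqm_ratr.
Qed.

Lemma PisotK_zsqm t : PisotK m t <->
  exists a b : int, t = zsqm a b /\ 0 < b /\ `|zsqm_conj a b| < 1.
Proof.
have s1 := sqm_gt1.
split.
  case=> t1 [tint [[tK [p sp]] [t' [tt' t'1]]]].
  have [a [b tE]] := algInt_inK_zsqm tK tint; subst t.
  move/conjK_zsqm: tt' t'1 => -> t'1; exists a, b; split=> //; split=> //.
  have b0 : b != 0.
    apply: contra_eq_neq sp => ->; rewrite zsqm0 -ratr_int horner_map.
    exact/eqP/nesym/eqP/ratr_neq_sqm.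
  move: t'1 t1; rewrite ltr_norml /zsqm /zsqm_conj => /andP[? ?] ?.
  have : 0 < b%:~R * s :> R by lra.
  by rewrite pmulr_lgt0 ?ltr0z; lra.
case=> a [b [-> [b0 t'1]]].
have b1 : 1 <= b%:~R :> R by rewrite ler1z.
split; first by move: t'1; rewrite ltr_norml /zsqm /zsqm_conj => /andP[]; nra.
split; first exact: algInt_zsqm.
split.
  split; first exact: inK_zsqm.
  exists ((b%:~R)^-1 *: ('X - (a%:~R)%:P)).
  rewrite map_polyZ map_polyXsubC hornerZ hornerXsubC fmorphV /= !ratr_int /zsqm.
  by field; rewrite intr_eq0 gt_eqF.
by exists (zsqm_conj a b); rewrite conjK_zsqm.
Qed.

Local Notation G := (Num.floor s).

Definition pisot (b : nat) (e : bool) : R := zsqm (Num.floor (b.+1%:R * s) + e) b.+1.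

Lemma pisot_false b : pisot b false = zsqm (Num.floor (b.+1%:R * s)) b.+1.
Proof. by rewrite /pisot addr0. Qed.

Lemma pisot_true b : pisot b true = zsqm (Num.floor (b.+1%:R * s) + 1) b.+1.
Proof. by []. Qed.

Lemma PisotK_pisot t : PisotK m t <-> exists b e, t = pisot b e.
Proof.
rewrite PisotK_zsqm; split.
  case=> a [b [-> [b0]]]; have [n ->] : exists n, b = n.+1%:Z by exists `|b|.-1; lia.
  rewrite /zsqm_conj floor_near ?mul_sqm_nonint //.
  by case=> ->; [exists n, false; rewrite /pisot addr0 | exists n, true].
case=> b [e ->]; exists (Num.floor (b.+1%:R * s) + e), b.+1; split=> //; split=> //.
rewrite /zsqm_conj floor_near ?mul_sqm_nonint //.
by case: e; [right | left; rewrite addr0].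
Qed.

(* The n-th Pisot number of K in increasing order (counting from 0): the
   Pisot numbers with coefficient [b.+1] of [sqrt m] are [pisot b false] and
   [pisot b true]. *)
Definition theta (n : nat) : R := pisot n./2 (odd n).

Lemma theta_double h : theta h.*2 = pisot h false.
Proof. by rewrite /theta half_double odd_double. Qed.

Lemma theta_doubleS h : theta h.*2.+1 = pisot h true.
Proof. by rewrite /theta -uphalfE uphalf_double oddS odd_double. Qed.

Lemma PisotK_theta t : PisotK m t <-> exists n, t = theta n.
Proof.
rewrite PisotK_pisot; split; last by case=> n ->; exists n./2, (odd n).
case=> b [[] ->]; first by exists b.*2.+1; rewrite theta_doubleS.
by exists b.*2; rewrite theta_double.
Qed.

Lemma theta_gap_even h : theta h.*2.+1 - theta h.*2 = 1.
Proof. by rewrite theta_doubleS theta_double pisot_true pisot_false /zsqm intrD1; ring. Qed.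

Lemma theta_gap_odd h :
  theta h.*2.+2 - theta h.*2.+1 = (floor_carry s h.+1)%:~R - 1 + s.
Proof.
rewrite -doubleS theta_double theta_doubleS pisot_true pisot_false /zsqm /floor_carry.
by rewrite intrB intrD1 -!pmulrn -!natr1; ring.
Qed.

Lemma floor_sqm_ge1 : 1 <= G.
Proof. by rewrite floor_ge_int; have := sqm_gt1; lra. Qed.

Lemma theta_gap_cases h :
  theta h.*2.+2 - theta h.*2.+1 = G%:~R - 1 + s \/
  theta h.*2.+2 - theta h.*2.+1 = G%:~R + s.
Proof.
rewrite theta_gap_odd; case: (floor_carry_cases s h.+1) => ->; first by left.
by right; rewrite intrD1; ring.
Qed.

Lemma theta_lt n : theta n < theta n.+1.
Proof.
rewrite -subr_gt0 -[n]odd_double_half; case: (odd n) => /=; last by rewrite theta_gap_even.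
have G1 : 1 <= G%:~R :> R by rewrite ler1z floor_sqm_ge1.
by have := sqm_gt1; case: (theta_gap_cases n./2) => ->; lra.
Qed.

Lemma FK_cases d : FK m d <-> d = 1 \/ d = G%:~R - 1 + s \/ d = G%:~R + s.
Proof.
rewrite /FK (increasing_gaps theta_lt PisotK_theta); split.
  case=> n ->; rewrite -[n]odd_double_half; case: (odd n) => /=.
    by right; apply: theta_gap_cases.
  by left; rewrite theta_gap_even.
have carry_gap c : c = G \/ c = G + 1 -> exists n, c%:~R - 1 + s = theta n.+1 - theta n.
  case/(exists_floor_carry sqm_nonint) => -[//|h] _ <-.
  by exists h.*2.+1; rewrite theta_gap_odd.
case=> [->|[->|->]]; first by exists 0%N; rewrite -double0 theta_gap_even.
  exact: carry_gap (or_introl erefl).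
by have [n nE] := carry_gap (G + 1) (or_intror erefl); exists n; rewrite -nE intrD1 addrK.
Qed.

Lemma conjK_uniq {x y y' : R} : conjK m x y -> conjK m x y' -> y = y'.
Proof. by case=> a [b [-> ->]] [a' [b' [/ratr_sqm_inj[<- <-] ->]]]. Qed.

Lemma conjK_nat (n : nat) : conjK m (n%:R : R) n%:R.
Proof. by exists n%:R, 0; rewrite !ratr_nat rmorph0 mul0r addr0 subr0. Qed.

Lemma conjK_mul_sub (x x' u u' w w' : R) : conjK m x x' -> conjK m u u' -> conjK m w w' ->
  conjK m (x * u - w) (x' * u' - w').
Proof.
case=> [a [b [-> ->]]] [c [d [-> ->]]] [e [f [-> ->]]].
exists (a * c + m%:R * b * d - e), (a * d + b * c - f).
rewrite !(rmorphB, rmorphD, rmorphM) /= ratr_nat -sqm_sqr; split; ring.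
Qed.

(* The conjugates [y j] of [2 cos (j th)] satisfy the Chebyshev recursion with
   [2 cos th] replaced by its conjugate; if that conjugate exceeded 2 in
   absolute value, [y n] could not be the conjugate 2 of [2 cos (n th) = 2]. *)
Lemma conjK_two_cos_le2 (n k : nat) (x' : R) : (0 < n)%N ->
  conjK m (2 * cos (2 * k%:R * pi / n%:R)) x' -> `|x'| <= 2.
Proof.
move=> n0 xx'; set th := 2 * k%:R * pi / n%:R in xx'.
rewrite leNgt; apply/negP => x'2.
pose c j := 2 * cos (j%:R * th).
have cS j : c j.+2 = c 1%N * c j.+1 - c j by rewrite /c two_cos_recS mul1r.
have c0 : c 0%N = 2%:R by rewrite /c mul0r cos0 mulr1.
have c1 : conjK m (c 1%N) x' by rewrite /c mul1r.
have conj_c j : exists y, conjK m (c j) y.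
  suff [] : (exists y, conjK m (c j) y) /\ exists y, conjK m (c j.+1) y by [].
  elim: j => [|j [[y cy] [y' cy']]].
    by split; [exists 2%:R; rewrite c0; apply: conjK_nat | exists x'].
  by split; [exists y' | exists (x' * y' - y); rewrite cS; apply: conjK_mul_sub].
have [y cy] := choice conj_c.
have y0 : y 0%N = 2 by apply: (conjK_uniq (cy 0%N)); rewrite c0; apply: conjK_nat.
have y1 : y 1%N = x' := conjK_uniq (cy 1%N) c1.
have yS j : y j.+2 = x' * y j.+1 - y j.
  by apply: (conjK_uniq (cy j.+2)); rewrite cS; apply: conjK_mul_sub.
have yn : y n = 2.
  apply: (conjK_uniq (cy n)); rewrite /c /th cos_root_of_unity // mulr1.
  exact: conjK_nat 2.
have [n' nE] : exists n', n = n'.+1 by exists n.-1; rewrite prednK.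
by have := lucas_norm_gt2 x'2 y0 y1 yS n'; rewrite -nE yn normr_nat ltxx.
Qed.

Lemma sqm_lt2 : s < 2 <-> (m < 4)%N.
Proof.
have := sqm_sqr; have := sqrtr_ge0 (m%:R : R); rewrite -/s => s0 s2.
by rewrite -(ltr_nat R m 4) -s2; split=> ?; nra.
Qed.

Lemma UK_cases {x} : UK m x -> x = 1 \/ (x = s /\ (m < 4)%N).
Proof.
case=> x0 [xint [xK [n [k [n4 [k1 [kn [_ xE]]]]]]]].
have x2 : x < 2.
  have kn' : (k < n)%N by lia.
  by rewrite xE; have := cos_root_of_unity_lt1 (R := R) k1 kn'; lra.
have [a [b xab]] := algInt_inK_zsqm xK xint.
have : `|zsqm_conj a b| <= 2.
  by apply: (@conjK_two_cos_le2 n k); [lia | rewrite -xE xab conjK_zsqm].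
rewrite xab /zsqm /zsqm_conj in x0 x2 * => /[!ler_norml] /andP[y1 y2].
have s1 := sqm_gt1.
have b_gt : -1 < b by rewrite -(ltr_int R) intrN mulr1z; nra.
have b_lt : b < 1 + 1 by rewrite -(ltr_int R) intrD1 mulr1z; nra.
have [b0|b1] : b = 0 \/ b = 1 by lia.
  rewrite b0 mulr0z mul0r addr0 in x0 x2 *.
  by left; have -> : a = 1 by move: x0 x2; rewrite ltr0z (ltr_int R a 2); lia.
rewrite b1 mulr1z mul1r in x0 x2 y1 *.
have a_gt : -1 < a by rewrite -(ltr_int R) intrN mulr1z; lra.
have a_lt : a < 1 by rewrite -(ltr_int R) mulr1z; lra.
have a0 : a = 0 by lia.
by right; rewrite a0 mulr0z add0r -sqm_lt2; split=> //; lra.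
Qed.

Lemma UK_two_cos (a b : int) (n : nat) : (4 <= n)%N ->
  0 < zsqm a b -> zsqm a b = 2 * cos (2 * pi / n%:R) -> UK m (zsqm a b).
Proof.
move=> n4 x0 xE; split=> //; split; first exact: algInt_zsqm.
split; first exact: inK_zsqm.
by exists n, 1%N; rewrite mulr1 coprime1n; do !split=> //; lia.
Qed.

Lemma UK1 : UK m (1 : R).
Proof.
have := @UK_two_cos 1 0 6 isT; rewrite zsqm0 mulr1z; apply; first exact: ltr01.
by rewrite (_ : 2 * pi / 6%:R = pi / 3) ?two_cos_pi3 //; field.
Qed.

Lemma UK_sqm (n : nat) : (4 <= n)%N -> s = 2 * cos (2 * pi / n%:R) -> UK m s.
Proof.
have -> : s = zsqm 0 1 by rewrite /zsqm add0r mul1r.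
by move=> n4; apply: UK_two_cos => //; rewrite /zsqm add0r mul1r; have := sqm_gt1; lra.
Qed.

Lemma TK_cases {y} : TK m y ->
  (exists2 a : int, s - 2 < a%:~R & y = a%:~R + s) \/ 4 * s - 2 < y.
Proof.
case=> yK [yint [y2 [y' [yy' [y'_gt [y'_lt _]]]]]].
have [a [c yE]] := algInt_inK_zsqm yK yint; subst y.
move/conjK_zsqm: yy' y'_gt y'_lt => ->; rewrite /zsqm_conj => y'_gt y'_lt.
have s1 := sqm_gt1.
have c0 : 0 < c by rewrite -(ltr0z R); move: y2; rewrite /zsqm; nra.
have [c1|c2] : c = 1 \/ 1 + 1 <= c by lia.
  by left; exists a; rewrite c1 ?zsqm1 // mulr1z mul1r in y'_gt *; lra.
right; have : (1 + 1)%:~R <= c%:~R :> R by rewrite ler_int.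
rewrite intrD1 mulr1z => c2'.
by rewrite /zsqm; nra.
Qed.

Lemma TK_add_sqm (a : int) : 2 < a%:~R + s -> -2 < a%:~R - s -> a%:~R - s < 2 ->
  TK m (a%:~R + s).
Proof.
rewrite -zsqm1 => y2 y'_gt y'_lt; split; first exact: inK_zsqm.
split; first exact: algInt_zsqm.
split=> //; exists (zsqm_conj a 1); split; first by rewrite conjK_zsqm.
rewrite /zsqm_conj mulr1z mul1r; do 2 split=> //.
by rewrite subr_eq0 -[s]mul1r -(mulr1z 1) intr_neq_mul_sqm.
Qed.

Lemma sqm_small_case (n : nat) : (m < 4)%N -> (4 <= n)%N ->
  s = 2 * cos (2 * pi / n%:R) ->
  (forall x : R, UK m x <-> (x = 1 \/ x = s)) /\
  (forall x : R, UK m x -> FK m x) /\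
  (forall d : R, FK m d <-> (d = 1 \/ d = s \/ d = 1 + s)) /\
  is_min (@TK R m) (1 + s).
Proof.
move=> /sqm_lt2 s2 n4 sE; have s1 := sqm_gt1.
have G1 : G = 1 by apply: floor_def; rewrite mulr1z intrD1; apply/andP; split; lra.
have FK_iff d : FK m d <-> (d = 1 \/ d = s \/ d = 1 + s).
  by rewrite FK_cases G1 mulr1z subrr add0r.
have UK_iff x : UK m x <-> (x = 1 \/ x = s).
  by split=> [/UK_cases[|[]]|[] ->]; [left | right | exact: UK1 | exact: UK_sqm sE].
split=> //; split; first by move=> x /UK_iff[] ->; apply/FK_iff; auto.
split=> //; split=> [|y yT]; first by have := @TK_add_sqm 1; rewrite mulr1z; apply; lra.
have [_ [_ [y2 _]]] := yT.
case: (TK_cases yT) => [[a a_gt yE]|]; last by lra.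
rewrite yE in y2 *; have a0 : 0 < a by rewrite -(ltr0z R); lra.
have : 1 <= a%:~R :> R by rewrite ler1z; lia.
lra.
Qed.

Lemma sqm_large_case : (6 <= m)%N ->
  (forall x : R, UK m x <-> x = 1) /\
  (forall x : R, UK m x -> FK m x) /\
  (forall d : R, FK m d <-> (d = 1 \/ d = G%:~R - 1 + s \/ d = 1 + (G%:~R - 1 + s))) /\
  is_min (@TK R m) (G%:~R - 1 + s).
Proof.
move=> m6; have s2 : 2 < s.
  have := sqm_sqr; have := sqrtr_ge0 (m%:R : R); rewrite -/s.
  have : 6 <= m%:R :> R by rewrite (ler_nat R 6 m).
  nra.
have sG := floor_lt_nonint sqm_nonint.
have /andP[_] := floor_itv s; rewrite intrD1 => Gs.
have G2 : 1 + 1 <= G by rewrite floor_ge_int intrD1 mulr1z; lra.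
rewrite -(ler_int R) intrD1 mulr1z in G2.
have UK_iff (x : R) : UK m x <-> x = 1.
  split=> [xU|->]; last exact: UK1.
  by case: (UK_cases xU) => [//|[_ m4]]; lia.
split=> //; split; first by move=> x /UK_iff ->; apply/FK_cases; left.
split; first by move=> d; rewrite FK_cases (_ : 1 + (G%:~R - 1 + s) = G%:~R + s) //; ring.
split; first by have := @TK_add_sqm (G - 1); rewrite intrB mulr1z; apply; lra.
move=> y /TK_cases[[a a_gt ->]|]; last by lra.
have a_gt' : G - 1 - 1 < a by rewrite -(ltr_int R) !intrB mulr1z; lra.
have : (G - 1)%:~R <= a%:~R :> R by rewrite ler_int; lia.
by rewrite intrB mulr1z; lra.
Qed.

End RealQuadraticField.

Theorem proposition2p1 (R : realType) (m : nat)
  (hm2 : (2 <= m)%N) (hsf : squarefree m)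
  (hmod : (m %% 4 == 2)%N \/ (m %% 4 == 3)%N) :
  (m = 2%N ->
     (forall x : R, UK m x <-> (x = 1 \/ x = Num.sqrt 2)) /\
     Num.sqrt 2 = 2 * cos (2 * pi / 8) :> R /\
     (forall x : R, UK m x -> FK m x) /\
     (forall d : R, FK m d <-> (d = 1 \/ d = Num.sqrt 2 \/ d = 1 + Num.sqrt 2)) /\
     is_min (@TK R m) (1 + Num.sqrt 2)) /\
  (m = 3%N ->
     (forall x : R, UK m x <-> (x = 1 \/ x = Num.sqrt 3)) /\
     Num.sqrt 3 = 2 * cos (2 * pi / 12) :> R /\
     (forall x : R, UK m x -> FK m x) /\
     (forall d : R, FK m d <-> (d = 1 \/ d = Num.sqrt 3 \/ d = 1 + Num.sqrt 3)) /\
     is_min (@TK R m) (1 + Num.sqrt 3)) /\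
  ((6 <= m)%N ->
     let t : R := (Num.floor (Num.sqrt (m%:R : R)))%:~R - 1 + Num.sqrt m%:R in
     (forall x : R, UK m x <-> x = 1) /\
     (forall x : R, UK m x -> FK m x) /\
     (forall d : R, FK m d <-> (d = 1 \/ d = t \/ d = 1 + t)) /\
     is_min (@TK R m) t).
Proof.
split; [|split].
- move=> m2; subst m; have sE := esym (@two_cos_pi4 R).
  have [? [? [? ?]]] := @sqm_small_case R _ hm2 hsf hmod 8 isT isT sE.
  by do 4 (split=> //).
- move=> m3; subst m; have sE := esym (@two_cos_pi6 R).
  have [? [? [? ?]]] := @sqm_small_case R _ hm2 hsf hmod 12 isT isT sE.
  by do 4 (split=> //).
- by move=> m6; apply: sqm_large_case.
Qed.
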